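(* Let $\mathfrak{n}\in A_+$ and $\gamma=\begin{pmatrix}a&b\\c&d\end{pmatrix}\in\mathrm{GL}_2(A)$. (1) Let $\ell=\max(\deg c,\deg d)$, and put $\epsilon=1$ if $\deg c\ge\deg d$ and $\epsilon=0$ otherwise. Then there exist $u\in K_\infty$ and $\gamma_0\in\Gamma_0(\mathfrak{n})$ such that $\gamma_0\gamma e_0=e_g$ with $g=\begin{pmatrix}\pi_\infty^{2\ell+\epsilon}&u\\0&1\end{pmatrix}\begin{pmatrix}0&1\\\pi_\infty&0\end{pmatrix}^{\epsilon}$. (2) Let $x,y\in A$ with $\gcd(x,y)=1=\gcd(\mathfrak{n},cx+dy)$, let $\delta=\max(\deg x,\deg y)$, and put $\epsilon=0$ if $\deg x>\deg y$ and $\epsilon=1$ otherwise. Then there exist $u\in K_\infty$ and $\gamma_0\in\Gamma_0(\mathfrak{n})$ such that $\gamma_0\gamma e_0=e_g$ with $g=w_\mathfrak{n}\begin{pmatrix}\pi_\infty^{\deg\mathfrak{n}+2\delta+\epsilon}&u\\0&1\end{pmatrix}\begin{pmatrix}0&1\\\pi_\infty&0\end{pmatrix}^{\epsilon}$, where $w_\mathfrak{n}=\begin{pmatrix}0&-1\\\mathfrak{n}&0\end{pmatrix}$.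
   Context: $\mathbb{F}_q$ a finite field, $A=\mathbb{F}_q[\theta]$, $A_+$ the monic polynomials, $\deg0=-\infty$; $\pi_\infty=\theta^{-1}$, $K_\infty=\mathbb{F}_q((\pi_\infty))$, $O_\infty=\mathbb{F}_q[[\pi_\infty]]$, $\mathcal{I}_\infty$ the Iwahori subgroup of matrices in $\mathrm{GL}_2(O_\infty)$ with lower-left entry in $\pi_\infty O_\infty$. The oriented edges of the Bruhat–Tits tree are the cosets $\mathrm{GL}_2(K_\infty)/K_\infty^\times\mathcal{I}_\infty$; $e_g$ denotes the edge (coset) of $g\in\mathrm{GL}_2(K_\infty)$, $\mathrm{GL}_2(K_\infty)$ acts by left multiplication, and $e_0=e_I$ for the identity matrix $I$. $\Gamma_0(\mathfrak{n})=\{\begin{pmatrix}a&b\\c&d\end{pmatrix}\in\mathrm{GL}_2(A):\mathfrak{n}\mid c\}$. *)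

From HB Require Import structures.
From mathcomp Require Import all_boot all_order all_algebra.
From mathcomp Require Import zify.
From Stdlib Require Import ClassicalEpsilon.
Set Implicit Arguments. Unset Strict Implicit. Unset Printing Implicit Defensive.
Import Order.TTheory GRing.Theory Num.Theory.
Local Open Scope ring_scope.

(* K_oo = F((pi)), pi = theta^-1 : formal Laurent series, represented by    *)
(* their coefficient function  n |-> coefficient of pi^n  (n : int), with    *)
(* support bounded below.  A = {poly F} in the variable theta.               *)
Section Laurent.
Variable F : fieldType.

Definition is_laurent (f : int -> F) :=
  exists N : int, forall n : int, n < N -> f n = 0.

Record Kinf := KInf { coef :> int -> F ; coefP : is_laurent coef }.

Definition lb (f : Kinf) : int :=
  proj1_sig (constructive_indefinite_description _ (coefP f)).

Lemma lbP (f : Kinf) n : n < lb f -> f n = 0.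
Proof.
rewrite /lb; case: (constructive_indefinite_description _ _) => N HN /=.
exact: HN.
Qed.

Definition kpi_fun (k : int) : int -> F := fun n => if n == k then 1 else 0.
Lemma kpi_laurent k : is_laurent (kpi_fun k).
Proof. exists k => n hn; rewrite /kpi_fun; case: eqP => // E; by rewrite E ltxx in hn. Qed.
Definition kpi (k : int) : Kinf := KInf (kpi_laurent k).

Definition kzero_fun : int -> F := fun _ => 0.
Lemma kzero_laurent : is_laurent kzero_fun.
Proof. by exists 0. Qed.
Definition kzero : Kinf := KInf kzero_laurent.

Definition kone : Kinf := kpi 0.

Definition kadd_fun (f g : Kinf) : int -> F := fun n => f n + g n.
Lemma kadd_laurent f g : is_laurent (kadd_fun f g).
Proof.
exists (Num.min (lb f) (lb g)) => n hn; rewrite /kadd_fun.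
rewrite !lbP ?addr0 //; apply: (lt_le_trans hn); by rewrite ge_min lexx ?orbT.
Qed.
Definition kadd (f g : Kinf) : Kinf := KInf (kadd_laurent f g).

Definition kopp_fun (f : Kinf) : int -> F := fun n => - f n.
Lemma kopp_laurent f : is_laurent (kopp_fun f).
Proof. exists (lb f) => n hn; by rewrite /kopp_fun lbP ?oppr0. Qed.
Definition kopp (f : Kinf) : Kinf := KInf (kopp_laurent f).

Definition kmul_fun (f g : Kinf) : int -> F := fun n =>
  let N := lb f + lb g in
  if N <= n then
    \sum_(k < (absz (n - N)).+1) f (lb f + k%:Z) * g (n - lb f - k%:Z)
  else 0.
Lemma kmul_laurent f g : is_laurent (kmul_fun f g).
Proof. exists (lb f + lb g) => n hn; by rewrite /kmul_fun leNgt hn. Qed.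
Definition kmul (f g : Kinf) : Kinf := KInf (kmul_laurent f g).

Definition knz (f : Kinf) := exists n, f n != 0.

Definition in_O (f : Kinf) := forall n : int, n < 0 -> f n = 0.
Definition in_piO (f : Kinf) := forall n : int, n <= 0 -> f n = 0.
Definition unit_O (f : Kinf) := in_O f /\ exists g, in_O g /\ kmul f g = kone.

(* A = F[theta] inside K_oo : theta^i = pi^(-i) *)
Definition poly_fun (p : {poly F}) : int -> F :=
  fun n => if n <= 0 then p`_(absz n) else 0.
Lemma poly_laurent p : is_laurent (poly_fun p).
Proof.
exists (- (size p)%:Z) => n hn; rewrite /poly_fun; case: ifP => // n0.
apply: nth_default; move: hn n0; case: n => m //=.
- move=> h _; have := lt_le_trans h (oppr_le0 (size p)%:Z); by [].
- rewrite NegzE ltrN2 ltz_nat => h _; exact: ltnW.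
Qed.
Definition kpoly (p : {poly F}) : Kinf := KInf (poly_laurent p).

End Laurent.

Record mat2 (R : Type) := Mat2 { m11 : R; m12 : R; m21 : R; m22 : R }.

Definition mulMA (R : ringType) (g h : mat2 R) : mat2 R :=
  Mat2 (m11 g * m11 h + m12 g * m21 h) (m11 g * m12 h + m12 g * m22 h)
       (m21 g * m11 h + m22 g * m21 h) (m21 g * m12 h + m22 g * m22 h).

Section Mat.
Variable F : fieldType.
Local Notation K := (Kinf F).

Definition mulMK (g h : mat2 K) : mat2 K :=
  Mat2 (kadd (kmul (m11 g) (m11 h)) (kmul (m12 g) (m21 h)))
       (kadd (kmul (m11 g) (m12 h)) (kmul (m12 g) (m22 h)))
       (kadd (kmul (m21 g) (m11 h)) (kmul (m22 g) (m21 h)))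
       (kadd (kmul (m21 g) (m12 h)) (kmul (m22 g) (m22 h))).

Definition scaleMK (z : K) (k : mat2 K) : mat2 K :=
  Mat2 (kmul z (m11 k)) (kmul z (m12 k)) (kmul z (m21 k)) (kmul z (m22 k)).

Definition detK (k : mat2 K) : K :=
  kadd (kmul (m11 k) (m22 k)) (kopp (kmul (m12 k) (m21 k))).

Definition iwahori (k : mat2 K) :=
  [/\ in_O (m11 k), in_O (m12 k), in_piO (m21 k), in_O (m22 k) & unit_O (detK k)].

(* e_h = e_g as cosets in GL_2(K_oo) / K_oo^x I_oo, i.e. h in g K_oo^x I_oo *)
Definition same_edge (h g : mat2 K) :=
  exists (z : K) (k : mat2 K), knz z /\ iwahori k /\ h = mulMK g (scaleMK z k).

Definition embM (g : mat2 {poly F}) : mat2 K :=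
  Mat2 (kpoly (m11 g)) (kpoly (m12 g)) (kpoly (m21 g)) (kpoly (m22 g)).

Definition upperK (e : int) (u : K) : mat2 K := Mat2 (kpi F e) u (kzero F) (kone F).
Definition Jpow (eps : bool) : mat2 K :=
  if eps then Mat2 (kzero F) (kone F) (kpi F 1) (kzero F)
  else Mat2 (kone F) (kzero F) (kzero F) (kone F).

End Mat.

Definition detA (F : fieldType) (g : mat2 {poly F}) : {poly F} :=
  m11 g * m22 g - m12 g * m21 g.
Definition GL2A (F : fieldType) (g : mat2 {poly F}) := detA g \is a GRing.unit.
Definition Gamma0 (F : fieldType) (n : {poly F}) (g : mat2 {poly F}) :=
  GL2A g /\ (n %| m21 g)%R.
Definition wn (F : fieldType) (n : {poly F}) : mat2 {poly F} := Mat2 0 (-1) n 0.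

(** The key fact is that a nonzero polynomial p of degree l satisfies
    pi^l p in O_oo^x: pi^l p is the power series whose coefficients are those
    of p in reverse order, with unit constant term lead_coef p.  Consequently,
    if the bottom row (c, d) of M in GL_2(K_oo) has d in pi^-l O_oo^x and
    c in pi^(1-l) O_oo, then M = [[pi^e, b/d], [0, 1]] * z * k with k in the
    Iwahori subgroup, and e is forced by the valuation of det M.  When c
    dominates, M J^-1 (J = [[0, 1], [pi, 0]], which normalises the Iwahori
    subgroup) has this shape instead.  Part (1) applies this to gamma with
    gamma_0 = 1.  For part (2) the two Bezout identities give gamma_0 in
    Gamma_0(n) such that gamma_0 gamma has first row (-y, x); then
    w_n^-1 gamma_0 gamma has bottom row (y, -x) and determinant
    det(gamma_0 gamma) / n. *)

From HB Require Import structures.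
From mathcomp Require Import all_boot all_order all_algebra.
From mathcomp Require Import zify ring.
From mathcomp Require Import boolp.
Unset Printing Implicit Defensive.
Import Order.TTheory GRing.Theory Num.Theory.
Local Open Scope ring_scope.

Lemma coefM_low (R : nzRingType) (p q p' q' : {poly R}) (m : nat) :
  (forall j, (j <= m)%N -> p`_j = p'`_j) -> (forall j, (j <= m)%N -> q`_j = q'`_j) ->
  (p * q)`_m = (p' * q')`_m.
Proof.
move=> ep eq; rewrite !coefM; apply: eq_bigr => k _.
have hk := ltn_ord k.
by rewrite ep ?eq //; lia.
Qed.

Section LaurentRing.
Context {F : fieldType}.
Local Notation K := (Kinf F).

Definition supp_ge (L : int) (f : int -> F) := forall n : int, n < L -> f n = 0.

(* [kmul] uses the chosen support bounds [lb]; [kmul_cauchy] shows that any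
   other bounds give the same coefficients. *)
Definition cauchy_coef (L1 L2 : int) (f g : int -> F) (n : int) : F :=
  if L1 + L2 <= n then
    \sum_(k < (absz (n - (L1 + L2))%R).+1) f (L1 + k%:Z) * g (n - L1 - k%:Z)
  else 0.

Lemma supp_geW {L L' : int} {f : int -> F} : L' <= L -> supp_ge L f -> supp_ge L' f.
Proof. by move=> hL zf n hn; apply: zf; apply: lt_le_trans hL. Qed.

Lemma supp_ge_lb (f : K) : supp_ge (lb f) f.
Proof. exact: lbP. Qed.

Lemma cauchy_coef_predl {L1 : int} (L2 : int) {f : int -> F} (g : int -> F) n :
  supp_ge L1 f -> cauchy_coef (L1 - 1) L2 f g n = cauchy_coef L1 L2 f g n.
Proof.
move=> zf; rewrite /cauchy_coef.
have [h|h] := lerP (L1 + L2) n.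
  have -> : L1 - 1 + L2 <= n by lia.
  have -> : absz (n - (L1 - 1 + L2))%R = (absz (n - (L1 + L2))%R).+1 by lia.
  rewrite big_ord_recl /= (zf (L1 - 1 + 0%N)); last by lia.
  rewrite mul0r add0r; apply: eq_bigr => i _.
  rewrite /bump /= add1n; congr (f _ * g _); lia.
have [e|ne] := eqVneq n (L1 + L2 - 1).
  have -> : L1 - 1 + L2 <= n by lia.
  have -> : absz (n - (L1 - 1 + L2))%R = 0%N by lia.
  by rewrite big_ord1 /= (zf (L1 - 1 + 0%N)) ?mul0r //; lia.
by have -> : L1 - 1 + L2 <= n = false by lia.
Qed.

Lemma cauchy_coef_predr (L1 : int) {L2 : int} (f : int -> F) {g : int -> F} n :
  supp_ge L2 g -> cauchy_coef L1 (L2 - 1) f g n = cauchy_coef L1 L2 f g n.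
Proof.
move=> zg; rewrite /cauchy_coef.
have [h|h] := lerP (L1 + L2) n.
  have -> : L1 + (L2 - 1) <= n by lia.
  have -> : absz (n - (L1 + (L2 - 1)))%R = (absz (n - (L1 + L2))%R).+1 by lia.
  by rewrite big_ord_recr /= (zg (n - L1 - _)) ?mulr0 ?addr0 //; lia.
have [e|ne] := eqVneq n (L1 + L2 - 1).
  have -> : L1 + (L2 - 1) <= n by lia.
  have -> : absz (n - (L1 + (L2 - 1)))%R = 0%N by lia.
  by rewrite big_ord1 /= (zg (n - L1 - _)) ?mulr0 //; lia.
by have -> : L1 + (L2 - 1) <= n = false by lia.
Qed.

Lemma cauchy_coef_subn {L1 L2 : int} {f g : int -> F} (n : int) (j1 j2 : nat) :
  supp_ge L1 f -> supp_ge L2 g ->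
  cauchy_coef (L1 - j1%:Z) (L2 - j2%:Z) f g n = cauchy_coef L1 L2 f g n.
Proof.
move=> zf zg; transitivity (cauchy_coef L1 (L2 - j2%:Z) f g n).
  elim: j1 => [|j IH]; first by rewrite subr0.
  rewrite -IH -(@cauchy_coef_predl (L1 - j%:Z)); last by apply: supp_geW zf; lia.
  by congr cauchy_coef; lia.
elim: j2 => [|j IH]; first by rewrite subr0.
rewrite -IH -(@cauchy_coef_predr _ (L2 - j%:Z)); last by apply: supp_geW zg; lia.
by congr cauchy_coef; lia.
Qed.

Lemma cauchy_coef_bounds {L1 L2 L1' L2' : int} {f g : int -> F} (n : int) :
  supp_ge L1 f -> supp_ge L2 g -> supp_ge L1' f -> supp_ge L2' g ->
  cauchy_coef L1 L2 f g n = cauchy_coef L1' L2' f g n.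
Proof.
move=> zf zg zf' zg'.
set M1 := Num.min L1 L1'; set M2 := Num.min L2 L2'.
suff toM A B : M1 <= A -> M2 <= B -> supp_ge A f -> supp_ge B g ->
    cauchy_coef A B f g n = cauchy_coef M1 M2 f g n.
  by rewrite !toM // ?ge_min ?lexx ?orbT.
move=> hA hB zA zB.
rewrite -(cauchy_coef_subn n (absz (A - M1)%R) (absz (B - M2)%R) zA zB).
by congr cauchy_coef; lia.
Qed.

Lemma kmul_cauchy {f g : K} {L1 L2 : int} (n : int) : supp_ge L1 f -> supp_ge L2 g ->
  kmul f g n = cauchy_coef L1 L2 f g n.
Proof.
by move=> zf zg; rewrite -(cauchy_coef_bounds n (supp_ge_lb f) (supp_ge_lb g) zf zg).
Qed.

Lemma Kinf_ext (f g : K) : f =1 g -> f = g.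
Proof.
case: f g => f fP [g gP] /= /funext efg; subst g.
by congr KInf; apply: Prop_irrelevance.
Qed.

Definition trunc_poly (L : int) (N : nat) (f : int -> F) : {poly F} :=
  \poly_(i < N) f (L + i%:Z).

Lemma cauchy_coef_truncM {L1 L2 : int} {f g : int -> F} {n : int} (N : nat) :
  L1 + L2 <= n -> (absz (n - (L1 + L2))%R < N)%N ->
  cauchy_coef L1 L2 f g n =
    (trunc_poly L1 N f * trunc_poly L2 N g)`_(absz (n - (L1 + L2))%R).
Proof.
move=> h hN; rewrite /cauchy_coef h coefM; apply: eq_bigr => k _; rewrite !coef_poly.
have hk := ltn_ord k.
have -> : (k < N)%N by lia.
have -> : (absz (n - (L1 + L2))%R - k < N)%N by lia.
congr (f _ * g _); lia.
Qed.

Lemma supp_ge_kmul {L1 L2 : int} {f g : K} :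
  supp_ge L1 f -> supp_ge L2 g -> supp_ge (L1 + L2) (kmul f g).
Proof. by move=> zf zg n hn; rewrite (kmul_cauchy _ zf zg) /cauchy_coef leNgt hn. Qed.

Lemma kmul_truncM {L1 L2 : int} {f g : K} {n : int} (N : nat) :
  supp_ge L1 f -> supp_ge L2 g -> L1 + L2 <= n -> (absz (n - (L1 + L2))%R < N)%N ->
  kmul f g n = (trunc_poly L1 N f * trunc_poly L2 N g)`_(absz (n - (L1 + L2))%R).
Proof. by move=> zf zg h hN; rewrite (kmul_cauchy _ zf zg) (cauchy_coef_truncM _ h hN). Qed.

Lemma trunc_poly_kmul {L1 L2 : int} {f g : K} {N i : nat} :
  supp_ge L1 f -> supp_ge L2 g -> (i < N)%N ->
  (trunc_poly (L1 + L2) N (kmul f g))`_i = (trunc_poly L1 N f * trunc_poly L2 N g)`_i.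
Proof.
move=> zf zg hi; rewrite coef_poly hi (kmul_truncM N zf zg); try lia.
by congr (_ `_ _); lia.
Qed.

Definition lb3 (f g h : K) := Num.min (lb f) (Num.min (lb g) (lb h)).

Lemma supp_ge_lb3 f g h :
  [/\ supp_ge (lb3 f g h) f, supp_ge (lb3 f g h) g & supp_ge (lb3 f g h) h].
Proof.
split; [apply: supp_geW (supp_ge_lb f) | apply: supp_geW (supp_ge_lb g)
       | apply: supp_geW (supp_ge_lb h)]; by rewrite /lb3 !ge_min lexx ?orbT.
Qed.

Lemma kaddA : associative (@kadd F).
Proof. by move=> f g h; apply: Kinf_ext => n; rewrite /= /kadd_fun addrA. Qed.
Lemma kaddC : commutative (@kadd F).
Proof. by move=> f g; apply: Kinf_ext => n; rewrite /= /kadd_fun addrC. Qed.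
Lemma kadd0 : left_id (kzero F) (@kadd F).
Proof. by move=> f; apply: Kinf_ext => n; rewrite /= /kadd_fun add0r. Qed.
Lemma kaddN : left_inverse (kzero F) (@kopp F) (@kadd F).
Proof. by move=> f; apply: Kinf_ext => n; rewrite /= /kadd_fun /kopp_fun addNr. Qed.

HB.instance Definition _ := gen_eqMixin K.
HB.instance Definition _ := gen_choiceMixin K.
HB.instance Definition _ := GRing.isZmodule.Build K kaddA kaddC kadd0 kaddN.

Lemma kmulC : commutative (@kmul F).
Proof.
move=> f g; apply: Kinf_ext => n.
have [zf zg _] := supp_ge_lb3 f g g; set L := lb3 f g g in zf zg.
have [h|h] := lerP (L + L) n.
  by rewrite !(kmul_truncM (absz (n - (L + L))%R).+1 _ _ h) // mulrC.
by rewrite (supp_ge_kmul zf zg) ?(supp_ge_kmul zg zf).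
Qed.

Lemma kmulA : associative (@kmul F).
Proof.
move=> f g h; apply: Kinf_ext => n.
have [zf zg zh] := supp_ge_lb3 f g h; set L := lb3 f g h in zf zg zh.
have zgh := supp_ge_kmul zg zh; have zfg := supp_ge_kmul zf zg.
have [hn|hn] := lerP (L + L + L) n; last first.
  by rewrite (supp_ge_kmul zf zgh) ?(supp_ge_kmul zfg zh) ?addrA.
set N := (absz (n - (L + L + L))%R).+1.
rewrite (kmul_truncM N zf zgh) ?addrA // (kmul_truncM N zfg zh) //.
transitivity
  ((trunc_poly L N f * trunc_poly L N g * trunc_poly L N h)`_(absz (n - (L + L + L))%R)).
  by rewrite -mulrA; apply: coefM_low => j hj //; rewrite trunc_poly_kmul //; lia.
by apply: coefM_low => j hj //; rewrite trunc_poly_kmul //; lia.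
Qed.

Lemma kmulDl : left_distributive (@kmul F) (@kadd F).
Proof.
move=> f g h; apply: Kinf_ext => n.
have [zf zg zh] := supp_ge_lb3 f g h; set L := lb3 f g h in zf zg zh.
have zfg : supp_ge L (kadd f g) by move=> m hm; rewrite /= /kadd_fun zf ?zg ?addr0.
rewrite (kmul_cauchy n zfg zh) /= /kadd_fun (kmul_cauchy n zf zh) (kmul_cauchy n zg zh).
rewrite /cauchy_coef; case: ifP => _; last by rewrite addr0.
by rewrite -big_split; apply: eq_bigr => k _; rewrite /= /kadd_fun mulrDl.
Qed.

Lemma supp_ge_kpi (k : int) : supp_ge k (kpi F k).
Proof. by move=> n hn /=; rewrite /kpi_fun; case: eqP => // e; rewrite e ltxx in hn. Qed.

Lemma trunc_poly_kpi (k : int) (N : nat) : trunc_poly k N.+1 (kpi F k) = 1.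
Proof.
apply/polyP => i; rewrite coef_poly coef1 /= /kpi_fun.
case: ifP => hi; last by case: i hi.
by case: i hi => [|i] _ /=; [rewrite addr0 eqxx | case: eqP => //; lia].
Qed.

Lemma kmul_kpi (f : K) (k n : int) : kmul f (kpi F k) n = f (n - k).
Proof.
have zf := supp_ge_lb f.
have [h|h] := lerP (lb f + k) n; last first.
  by rewrite (supp_ge_kmul zf (supp_ge_kpi k)) ?zf //; lia.
rewrite (kmul_truncM (absz (n - (lb f + k))%R).+1 zf (supp_ge_kpi k) h) //.
by rewrite trunc_poly_kpi mulr1 coef_poly ltnSn; congr (coef f _); lia.
Qed.

Lemma kmul1 : left_id (kone F) (@kmul F).
Proof. by move=> f; apply: Kinf_ext => n; rewrite kmulC kmul_kpi subr0. Qed.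

Lemma kone_neq0 : kone F != kzero F.
Proof.
apply/eqP => /(congr1 (fun f : K => coef f 0)).
by rewrite /= /kpi_fun eqxx => /eqP; rewrite oner_eq0.
Qed.

HB.instance Definition _ :=
  GRing.Zmodule_isComNzRing.Build K kmulA kmulC kmul1 kmulDl kone_neq0.

Lemma kmulE (f g : K) : kmul f g = f * g. Proof. by []. Qed.
Lemma koneE : kone F = 1. Proof. by []. Qed.
Lemma kzeroE : kzero F = 0. Proof. by []. Qed.

Lemma coefKD (f g : K) n : (f + g) n = f n + g n. Proof. by []. Qed.
Lemma coefKN (f : K) n : (- f) n = - f n. Proof. by []. Qed.

Lemma kpi_add (a b : int) : kpi F a * kpi F b = kpi F (a + b).
Proof.
apply: Kinf_ext => n; rewrite [LHS]kmul_kpi /= /kpi_fun.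
by congr (if _ then _ else _); apply/eqP/eqP; lia.
Qed.

Lemma kpiNr (a : int) : kpi F a * kpi F (- a) = 1.
Proof. by rewrite kpi_add subrr. Qed.

Lemma kpoly_is_zmod_morphism : zmod_morphism (@kpoly F).
Proof.
move=> p q; apply: Kinf_ext => n.
by rewrite coefKD coefKN /= /poly_fun; case: ifP; rewrite ?coefB ?subr0.
Qed.

HB.instance Definition _ :=
  GRing.isZmodMorphism.Build {poly F} K (@kpoly F) kpoly_is_zmod_morphism.

Lemma kpolyMX (p : {poly F}) : kpoly (p * 'X) = kpoly p * kpi F (-1).
Proof.
apply: Kinf_ext => n; rewrite [RHS]kmul_kpi /= /poly_fun coefMX.
have [e|ne] := eqVneq (absz n) 0%N.
  by case: ifP => h; case: ifP => h' //; lia.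
by case: ifP => h; case: ifP => h' //; try lia; congr (_ `_ _); lia.
Qed.

Lemma kpolyC_mul (c : F) (f : K) n : (kpoly c%:P * f) n = c * f n.
Proof.
rewrite mulrC; have zf := supp_ge_lb f.
have zc : supp_ge 0 (kpoly c%:P).
  by move=> m hm /=; rewrite /poly_fun coefC; case: ifP => // _; case: eqP => //; lia.
have [h|h] := lerP (lb f + 0) n; last first.
  by rewrite (supp_ge_kmul zf zc) // zf ?mulr0 //; lia.
rewrite (kmul_truncM (absz (n - (lb f + 0))%R).+1 zf zc h) //.
have -> : trunc_poly 0 (absz (n - (lb f + 0))%R).+1 (kpoly c%:P) = c%:P.
  apply/polyP => i; rewrite coef_poly coefC /= /poly_fun.
  by case: ifP => hi; case: i hi => [|i] hi //=; rewrite ?coefC.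
by rewrite coefMC coef_poly ltnSn mulrC; congr (_ * coef f _); lia.
Qed.

Lemma kpolyCM (c : F) (p : {poly F}) : kpoly (c%:P * p) = kpoly c%:P * kpoly p.
Proof.
apply: Kinf_ext => n; rewrite kpolyC_mul /= /poly_fun coefCM.
by case: ifP; rewrite ?mulr0.
Qed.

Lemma kpoly_is_monoid_morphism : monoid_morphism (@kpoly F).
Proof.
split=> [|p q].
  apply: Kinf_ext => n; rewrite /= /poly_fun /kpi_fun coef1.
  case: ifP => h; have [e|ne] := eqVneq n 0; subst => //=.
  by have -> : (`|n|%N == 0%N) = false by lia.
elim/poly_ind: p => [|p c IH]; first by rewrite mul0r raddf0 mul0r.
have -> : (p * 'X + c%:P) * q = p * q * 'X + c%:P * q by rewrite mulrDl mulrAC.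
by rewrite !raddfD /= !kpolyMX IH kpolyCM; ring.
Qed.

HB.instance Definition _ :=
  GRing.isMonoidMorphism.Build {poly F} K (@kpoly F) kpoly_is_monoid_morphism.

Lemma kpoly0 : kpoly (0 : {poly F}) = 0. Proof. exact: rmorph0. Qed.
Lemma kpoly1 : kpoly (1 : {poly F}) = 1. Proof. exact: rmorph1. Qed.
Lemma kpolyN (p : {poly F}) : kpoly (- p) = - kpoly p. Proof. exact: rmorphN. Qed.
Lemma kpolyB (p q : {poly F}) : kpoly (p - q) = kpoly p - kpoly q.
Proof. exact: rmorphB. Qed.
Lemma kpolyM (p q : {poly F}) : kpoly (p * q) = kpoly p * kpoly q.
Proof. exact: rmorphM. Qed.

Definition kser_fun (R : {poly F}) (n : int) : F := if 0 <= n then R`_(absz n) else 0.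
Lemma kser_laurent (R : {poly F}) : is_laurent (kser_fun R).
Proof. by exists 0 => n hn; rewrite /kser_fun leNgt hn. Qed.
Definition kser (R : {poly F}) : K := KInf (kser_laurent R).

Lemma in_O_kser (R : {poly F}) : in_O (kser R).
Proof. by move=> n hn; rewrite /= /kser_fun leNgt hn. Qed.

Lemma kpi_size_kpoly (p : {poly F}) : p != 0 ->
  kpi F (size p).-1 * kpoly p = kser (Poly (rev p)).
Proof.
move=> p0; have [l sp] : exists l, size p = l.+1.
  by exists (size p).-1; rewrite prednK // size_poly_gt0.
apply: Kinf_ext => n; rewrite mulrC kmul_kpi /= /poly_fun /kser_fun coef_Poly sp /=.
case: ifP => h1; case: ifP => h2; try lia.
- by rewrite nth_rev sp; [congr (_ `_ _) | ]; lia.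
- by rewrite nth_default // sp; lia.
- by rewrite nth_default // size_rev sp; lia.
Qed.

Section PowerSeriesInverse.
Variable R : {poly F}.
Hypothesis R0 : R`_0 != 0.

(* R = R`_0 (1 - y) with y = O(pi), so 1/R is R`_0^-1 times the geometric
   series in y, whose coefficient of pi^m is already that of [geo m]. *)
Let y : {poly F} := 1 - (R`_0)^-1 *: R.

Let y_coef0 : y`_0 = 0.
Proof. by rewrite coefB coef1 coefZ mulVf // subrr. Qed.

Let coef_expy_low i j : (j < i)%N -> (y ^+ i)`_j = 0.
Proof.
elim: i j => [|i IH] j // hj; rewrite exprS coefM big1 // => k _.
case: (nat_of_ord k) (ltn_ord k) => [|k'] hk; first by rewrite y_coef0 mul0r.
by rewrite IH ?mulr0 //; lia.
Qed.

Let geo (m : nat) : {poly F} := \sum_(j < m.+1) y ^+ j.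

Let coef_geo_stable m d j : (j <= m)%N -> (geo (m + d))`_j = (geo m)`_j.
Proof.
move=> hj; elim: d => [|d IH]; first by rewrite addn0.
by rewrite addnS /geo big_ord_recr coefD IH coef_expy_low ?addr0 //=; lia.
Qed.

Let mul_geo m : R * geo m = R`_0 *: (1 - y ^+ m.+1).
Proof.
have eR : R = R`_0 *: (1 - y) by rewrite /y opprB addrC subrK scalerA mulfV // scale1r.
by rewrite [in LHS]eR -scalerAl -opprB mulNr -subrX1 opprB.
Qed.

Definition kser_inv_fun (n : int) : F :=
  if 0 <= n then (R`_0)^-1 * (geo (absz n))`_(absz n) else 0.
Lemma kser_inv_laurent : is_laurent kser_inv_fun.
Proof. by exists 0 => n hn; rewrite /kser_inv_fun leNgt hn. Qed.
Definition kser_inv : K := KInf kser_inv_laurent.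

Lemma unit_O_kser : unit_O (kser R).
Proof.
have zi : in_O kser_inv by move=> n hn; rewrite /= /kser_inv_fun leNgt hn.
split; first exact: in_O_kser.
exists kser_inv; split=> //; apply: Kinf_ext => n.
have [h|h] := lerP (0 + 0) n; last first.
  rewrite (supp_ge_kmul (in_O_kser R) zi) //= /kpi_fun.
  by case: eqP => //; lia.
set m := absz (n - (0 + 0))%R.
rewrite (kmul_truncM m.+1 (in_O_kser R) zi h) //.
transitivity ((R * ((R`_0)^-1 *: geo m))`_m).
  apply: coefM_low => i hi;
    rewrite coef_poly ltnS hi /= /kser_fun /kser_inv_fun add0r //=.
  by move: hi; rewrite -/m => hi; rewrite coefZ -(subnKC hi) coef_geo_stable.
rewrite -scalerAr mul_geo scalerA mulVf // scale1r coefB coef_expy_low // subr0.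
rewrite coef1 /= /kpi_fun.
have -> : (m == 0%N) = (n == 0).
  by apply/idP/idP => /eqP e; apply/eqP; rewrite /m in e *; lia.
by case: (n == 0).
Qed.

End PowerSeriesInverse.

Lemma supp_ge_kpoly (p : {poly F}) : supp_ge (1 - (size p)%:Z) (kpoly p).
Proof.
move=> n hn /=; rewrite /poly_fun; case: ifP => // _; rewrite nth_default //.
by set s := size _ in hn *; lia.
Qed.

Lemma in_piOE (f : K) : in_piO f <-> supp_ge 1 f.
Proof. by split=> zf n hn; apply: zf; lia. Qed.

Lemma knz_unit (f g : K) : f * g = 1 -> knz f.
Proof.
move=> fg; apply: contrapT => nzf.
have f0 : f = 0.
  by apply: Kinf_ext => n; apply/eqP/negPn/negP => fn; apply: nzf; exists n.
by move: fg; rewrite f0 mul0r => /eqP; rewrite eq_sym oner_eq0.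
Qed.

Lemma in_OM {f g : K} : in_O f -> in_O g -> in_O (f * g).
Proof. exact: supp_ge_kmul. Qed.

Lemma unit_OM {f g : K} : unit_O f -> unit_O g -> unit_O (f * g).
Proof.
move=> [Of [f' [Of' ff']]] [Og [g' [Og' gg']]]; split; first exact: in_OM.
exists (f' * g'); split; first exact: in_OM.
move: ff' gg'; rewrite !kmulE koneE => ff' gg'.
by rewrite mulrACA ff' gg' mulr1.
Qed.

Lemma unit_ON {f : K} : unit_O f -> unit_O (- f).
Proof.
move=> [Of [f' [Of' ff']]]; split; first by move=> n hn; rewrite coefKN Of ?oppr0.
by exists (- f'); split; [move=> n hn; rewrite coefKN Of' ?oppr0 | rewrite kmulE mulrNN].
Qed.

Lemma unit_O_inv {f : K} : unit_O f -> exists2 g, unit_O g & f * g = 1.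
Proof.
move=> [Of [g [Og fg]]]; exists g => //; split=> //.
by exists f; split=> //; rewrite kmulE mulrC.
Qed.

Lemma unit_O_neq0 {f : K} : unit_O f -> f != 0.
Proof.
move=> [_ [g [_ fg]]]; apply: contra_eq_neq fg => ->.
by rewrite kmulE mul0r eq_sym; exact: kone_neq0.
Qed.

Lemma unit_O_kpoly_unit (p : {poly F}) : p \is a GRing.unit -> unit_O (kpoly p).
Proof.
have in_O_kpoly (q : {poly F}) : q \is a GRing.unit -> in_O (kpoly q).
  rewrite poly_unitE => /andP [/eqP sq _].
  by move=> n hn; rewrite (supp_ge_kpoly q n) // sq.
move=> pU; split; first exact: in_O_kpoly.
exists (kpoly p^-1); split; first by apply: in_O_kpoly; rewrite unitrV.
by rewrite kmulE -kpolyM mulrV // kpoly1.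
Qed.

Lemma unit_O_kpi_size {p : {poly F}} : p != 0 -> unit_O (kpi F (size p).-1 * kpoly p).
Proof.
move=> p0; rewrite kpi_size_kpoly //; apply: unit_O_kser.
rewrite coef_Poly nth_rev ?size_poly_gt0 // subn1 -lead_coefE.
by rewrite lead_coef_eq0.
Qed.

End LaurentRing.

Section Edges.
Context {F : fieldType}.
Local Notation K := (Kinf F).
Local Notation Jinv := (Mat2 0 (kpi F (-1)) 1 0 : mat2 K).

Lemma mulMKE (g h : mat2 K) : mulMK g h =
  Mat2 (m11 g * m11 h + m12 g * m21 h) (m11 g * m12 h + m12 g * m22 h)
       (m21 g * m11 h + m22 g * m21 h) (m21 g * m12 h + m22 g * m22 h).
Proof. by []. Qed.

Lemma scaleMKE (z : K) (k : mat2 K) :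
  scaleMK z k = Mat2 (z * m11 k) (z * m12 k) (z * m21 k) (z * m22 k).
Proof. by []. Qed.

Lemma detKE (k : mat2 K) : detK k = m11 k * m22 k - m12 k * m21 k.
Proof. by []. Qed.

Lemma mulMK_Jpow0 (g : mat2 K) : mulMK g (Jpow F false) = g.
Proof. by case: g => ? ? ? ?; rewrite mulMKE /= koneE kzeroE; congr Mat2; ring. Qed.

Lemma mulMK_assoc : associative (@mulMK F).
Proof.
by case=> ? ? ? ? [? ? ? ?] [? ? ? ?]; rewrite !mulMKE /=; congr Mat2; ring.
Qed.

Lemma same_edge_mull (h M g : mat2 K) :
  same_edge M g -> same_edge (mulMK h M) (mulMK h g).
Proof.
move=> [z [k [z0 [Ik ->]]]]; exists z, k; split=> //; split=> //.
by rewrite mulMK_assoc.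
Qed.

Lemma same_edge_upper (M : mat2 K) (l e : int) :
  unit_O (kpi F l * m22 M) -> supp_ge (1 - l) (m21 M) ->
  unit_O (kpi F (2 * l - e) * detK M) ->
  exists u, same_edge M (upperK e u).
Proof.
case: M => a b c d /= ud zc uD.
(* w = (pi^l d)^-1, so z := d w = pi^-l and u := b pi^l w = b / d. *)
have [w uw dw] := unit_O_inv ud.
set D := detK _ in uD *.
exists (b * kpi F l * w), (d * w),
  (Mat2 (kpi F (2 * l - e) * D * w) 0 (kpi F l * c) (kpi F l * d)).
split; first by apply: (knz_unit _ (kpi F l)); rewrite -dw; ring.
split.
  split=> /=.
  - by case: (unit_OM uD uw).
  - by [].
  - apply/in_piOE; apply: supp_geW (supp_ge_kmul (supp_ge_kpi l) zc); lia.
  - by case: ud.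
  - by rewrite detKE /= mul0r subr0 -mulrA [w * _]mulrC dw mulr1.
have epi : kpi F (2 * l - e) = kpi F (- e) * kpi F l * kpi F l.
  by rewrite !kpi_add; congr kpi; lia.
have ee : kpi F e * kpi F (- e) = 1 := kpiNr e.
rewrite epi mulMKE scaleMKE /upperK /D detKE /= koneE kzeroE.
by congr Mat2; ring: ee dw.
Qed.

Lemma same_edge_mulJ (M g : mat2 K) :
  same_edge (mulMK M Jinv) g -> same_edge M (mulMK g (Jpow F true)).
Proof.
move=> [z [[a b c d] [nz [[Oa Ob /in_piOE Pc Od uk] e]]]].
have pi1 : kpi F 1 * kpi F (-1) = 1 by rewrite kpiNr.
(* J^-1 k J, which is again in the Iwahori subgroup *)
exists z, (Mat2 d (c * kpi F (-1)) (b * kpi F 1) a); split=> //; split.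
  split=> //=.
  - by have := supp_ge_kmul Pc (supp_ge_kpi (-1)).
  - by apply/in_piOE; have := supp_ge_kmul Ob (supp_ge_kpi 1).
  - by move: uk; rewrite !detKE /=; congr unit_O; ring: pi1.
have eM : M = mulMK (mulMK M Jinv) (Jpow F true).
  by case: M {e} => ? ? ? ?; rewrite !mulMKE /Jpow /= koneE kzeroE; congr Mat2; ring: pi1.
rewrite eM e -!mulMK_assoc; congr mulMK.
by rewrite !mulMKE !scaleMKE /Jpow /= koneE kzeroE; congr Mat2; ring: pi1.
Qed.

Lemma same_edge_upperJ (M : mat2 K) (l e : int) :
  unit_O (kpi F l * m21 M) -> supp_ge (- l) (m22 M) ->
  unit_O (kpi F (2 * l + 1 - e) * detK M) ->
  exists u, same_edge M (mulMK (upperK e u) (Jpow F true)).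
Proof.
case: M => a b c d /= uc zd uD.
have pi1 : kpi F 1 * kpi F (-1) = 1 by rewrite kpiNr.
have [|||u hu] := @same_edge_upper (mulMK (Mat2 a b c d) Jinv) (l + 1) e;
  last (by exists u; apply: same_edge_mulJ); rewrite mulMKE; cbn [m21 m22].
- suff -> : kpi F (l + 1) * (c * kpi F (-1) + d * 0) = kpi F l * c by [].
  by rewrite -kpi_add; ring: pi1.
- by rewrite mulr0 mulr1 add0r (_ : 1 - (l + 1) = - l) //; lia.
- rewrite (_ : 2 * (l + 1) - e = 2 * l + 1 - e + 1); last lia.
  set N := detK _.
  suff -> : kpi F (2 * l + 1 - e + 1) * N = - (kpi F (2 * l + 1 - e) * detK (Mat2 a b c d)).
    exact: unit_ON.
  by rewrite -kpi_add /N !detKE; cbn [m11 m12 m21 m22]; ring: pi1.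
Qed.

Lemma same_edge_poly_bottom_row (M : mat2 K) (c d : {poly F}) (m : nat) :
  m21 M = kpoly c -> m22 M = kpoly d -> unit_O (kpi F (- m%:Z) * detK M) ->
  exists u, same_edge M
    (mulMK (upperK ((m + 2 * (maxn (size c) (size d)).-1 + (size d <= size c))%N)%:Z u)
           (Jpow F (size d <= size c)%N)).
Proof.
move=> ec ed uD.
have [dc|cd] := leqP (size d) (size c); last first.
  have d0 : d != 0 by rewrite -size_poly_gt0; lia.
  have [|||u hu] := same_edge_upper M (size d).-1 (m + 2 * (size d).-1)%N;
    last by exists u; rewrite mulMK_Jpow0 addn0.
  all: rewrite ?ec ?ed.
  - exact: unit_O_kpi_size.
  - by apply: supp_geW (supp_ge_kpoly c); lia.
  - by rewrite (_ : _ - _ = - m%:Z) //; lia.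
have c0 : c != 0.
  apply: contraTneq dc => c0; rewrite c0 size_poly0 leqn0 size_poly_eq0; apply/negP => /eqP d0.
  by move: (unit_O_neq0 uD); rewrite detKE ec ed c0 d0 kpoly0 !mulr0 subrr mulr0 eqxx.
apply: (same_edge_upperJ _ (size c).-1); rewrite ?ec ?ed.
- exact: unit_O_kpi_size.
- by apply: supp_geW (supp_ge_kpoly d); move: c0; rewrite -size_poly_gt0; lia.
- by rewrite (_ : _ - _ = - m%:Z) //; lia.
Qed.

Lemma detK_embM (g : mat2 {poly F}) : detK (embM g) = kpoly (detA g).
Proof. by rewrite detKE /detA kpolyB !kpolyM. Qed.

Lemma same_edge_GL2A {gam : mat2 {poly F}} : GL2A gam ->
  let l := (maxn (size (m21 gam)) (size (m22 gam))).-1 in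
  let eps := (size (m22 gam) <= size (m21 gam))%N in
  exists u, same_edge (embM gam) (mulMK (upperK ((2 * l + eps)%N)%:Z u) (Jpow F eps)).
Proof.
move=> uG; apply: (same_edge_poly_bottom_row _ _ _ 0) => //.
by rewrite -[kpi F _]/(kone F) koneE mul1r detK_embM; exact: unit_O_kpoly_unit.
Qed.

Lemma same_edge_wn {n : {poly F}} {M : mat2 {poly F}} {x y : {poly F}} :
  n != 0 -> GL2A M -> m11 M = - y -> m12 M = x ->
  let delta := (maxn (size x) (size y)).-1 in
  let eps := (size x <= size y)%N in
  exists u, same_edge (embM M) (mulMK (embM (wn n))
    (mulMK (upperK (((size n).-1 + 2 * delta + eps)%N)%:Z u) (Jpow F eps))).
Proof.
move=> n0 uM e11 e12.
have [w uw nw] := unit_O_inv (unit_O_kpi_size n0).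
set v := kpi F (size n).-1 * w.
have nv : kpoly n * v = 1 by rewrite -nw /v; ring.
(* M' = w_n^-1 M *)
set M' := Mat2 (kpoly (m21 M) * v) (kpoly (m22 M) * v) (kpoly y) (kpoly (- x)).
have -> : embM M = mulMK (embM (wn n)) M'.
  rewrite /M'; case: M uM e11 e12 {M'} => a b c d _ /= -> ->.
  by rewrite mulMKE /embM /wn /= !kpolyN kpoly1 kpoly0; congr Mat2; ring: nv.
have [|u hu] := same_edge_poly_bottom_row M' y (- x) (size n).-1 erefl erefl.
  rewrite (_ : _ * _ = w * kpoly (detA M)); first exact: unit_OM uw (unit_O_kpoly_unit _ uM).
  rewrite detKE /M' /v /detA e11 e12 /= kpolyB !kpolyM !kpolyN.
  have pin : kpi F (size n).-1 * kpi F (- (size n).-1%:Z) = 1 := kpiNr _.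
  by ring: pin.
by exists u; apply: same_edge_mull; rewrite size_polyN maxnC in hu.
Qed.

End Edges.

Section Gamma0.
Context {F : fieldType}.

Lemma GL2A_mulMA {g h : mat2 {poly F}} : GL2A g -> GL2A h -> GL2A (mulMA g h).
Proof.
rewrite /GL2A => ug uh.
suff -> : detA (mulMA g h) = detA g * detA h by rewrite unitrM ug uh.
by rewrite /detA /mulMA /=; ring.
Qed.

Lemma mul1MA (g : mat2 {poly F}) : mulMA (Mat2 1 0 0 1) g = g.
Proof. by case: g => ? ? ? ?; rewrite /mulMA /= !mul1r !mul0r !addr0 !add0r. Qed.

Lemma Gamma0_1 (n : {poly F}) : Gamma0 n (Mat2 1 0 0 1).
Proof. by split; rewrite ?dvdp0 // /GL2A /detA /= mulr1 mulr0 subr0 unitr1. Qed.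

Lemma Gamma0_top_row {n x y : {poly F}} {gam : mat2 {poly F}} :
  GL2A gam -> coprimep x y -> coprimep n (m21 gam * x + m22 gam * y) ->
  exists g0, [/\ Gamma0 n g0, m11 (mulMA g0 gam) = - y & m12 (mulMA g0 gam) = x].
Proof.
case: gam => a b c d; rewrite /GL2A /detA /= => uD.
move=> /Bezout_eq1_coprimepP [[u2 v2] /= e2] /Bezout_eq1_coprimepP [[u1 v1] /= e1].
set D := a * d - b * c in uD.
have DV : D^-1 * D = 1 by rewrite mulVr.
(* (al, be) := (-y, x) gam^-1; Bezout for (x, y) gives al A + be B = 1, and
   Bezout for (n, c x + d y) corrects B v1 D away modulo n. *)
set al := - (D^-1 * (d * y + c * x)); set be := D^-1 * (b * y + a * x).
have row_y : al * a + be * c = - y by rewrite -[RHS]mul1r -DV /al /be /D; ring.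
have row_x : al * b + be * d = x by rewrite -[RHS]mul1r -DV /al /be /D; ring.
pose A := u2 * b - v2 * a; pose B := u2 * d - v2 * c.
have hAB : al * A + be * B = 1.
  transitivity (u2 * (al * b + be * d) - v2 * (al * a + be * c)).
    by rewrite /A /B; ring.
  by rewrite row_x row_y -e2; ring.
have hcx : c * x + d * y = - (D * al).
  by rewrite -[LHS]mul1r -DV /al; ring.
pose la := A - be * B * v1 * D; pose ka := - (B * u1).
have det0 : al * la - be * (n * ka) = 1.
  by rewrite -hAB -[X in _ = _ + X]mulr1 -e1 hcx /la /ka; ring.
exists (Mat2 al be (n * ka) la); split=> //.
by split; rewrite /= ?dvdp_mulr // /GL2A /detA /= det0 unitr1.
Qed.

End Gamma0.

Theorem lemma2p4 (F : finFieldType) (n : {poly F}) (gam : mat2 {poly F}) :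
  n \is monic -> GL2A gam ->
  (* (1) *)
  (let c := m21 gam in let d := m22 gam in
   let l := (maxn (size c) (size d)).-1 in
   let eps := (size d <= size c)%N in
   exists (u : Kinf F) (g0 : mat2 {poly F}),
     Gamma0 n g0 /\
     same_edge (embM (mulMA g0 gam))
               (mulMK (upperK ((2 * l + eps)%N)%:Z u) (Jpow F eps)))
  /\
  (* (2) *)
  (forall x y : {poly F},
     coprimep x y -> coprimep n (m21 gam * x + m22 gam * y) ->
     let delta := (maxn (size x) (size y)).-1 in
     let eps := (size x <= size y)%N in
     exists (u : Kinf F) (g0 : mat2 {poly F}),
       Gamma0 n g0 /\
       same_edge (embM (mulMA g0 gam))
                 (mulMK (embM (wn n))
                   (mulMK (upperK (((size n).-1 + 2 * delta + eps)%N)%:Z u) (Jpow F eps)))).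
Proof.
move=> mn uG; split.
  have [u hu] := same_edge_GL2A uG.
  by exists u, (Mat2 1 0 0 1); rewrite mul1MA; split; [exact: Gamma0_1 | exact: hu].
move=> x y cxy cn; have [g0 [G0 e11 e12]] := Gamma0_top_row uG cxy cn.
have [u hu] := same_edge_wn (monic_neq0 mn) (GL2A_mulMA G0.1 uG) e11 e12.
by exists u, g0.
Qed.
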